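(* Every safe and aperiodic program is terminating, i.e. $\llbracket\mathtt{P}\rrbracket$ is a total function for every $\mathtt{P}\in\mathrm{SAFE}\cap\mathrm{AP}$. Moreover, the inclusion $\llbracket\mathrm{SAFE}\cap\mathrm{AP}\rrbracket\subseteq\llbracket\mathrm{TERM}\rrbracket$ is strict: some terminating program computes a function not computed by any safe aperiodic program.
   Context: Words and values. $\Sigma\supseteq\{0,1\}$ is a finite alphabet and $\mathbb{W}=\Sigma^*$. Here $|w|$ is the length of $w$ and $1^n$ is the word of $n$ ones. A word counts as true iff it equals $1$. Write $v\unlhd w$ if $w=uvu'$ for some $u,u'$. Operators. Fix a countable set $\mathbb{V}$ of variables and a set $\mathbb{O}$ of operators. Each $\mathsf{op}$ has an arity and a total function $\llbracket\mathsf{op}\rrbracket:\mathbb{W}^{ar(\mathsf{op})}\to\mathbb{W}$. The set $\mathbb{O}$ includes $=,<,\le,0,+1,-1,\mathsf{not},\mathsf{and},\mathsf{or}$. Syntax. - Expressions: $e::=x\mid\mathsf{op}(\bar e)\mid\mathsf{declass}(e,e)$. - Statements: $s::=\mathtt{skip}\mid x:=e\mid s;s\mid\mathtt{if}(e)\{s\}\mathtt{else}\{s\}\mid\mathtt{while}(e)\{s\}\mid\mathtt{break}(e)$. - Programs: $\mathtt{prog}(\bar x)\{s\ \mathtt{return}\ y\}$, with $\mathrm{body}(\mathtt{P})=s$. Semantics. - Stores are total maps $\mathbb{V}\to\mathbb{W}$; the store $\mu_\emptyset$ is constantly $\epsilon$. - $\mathsf{declass}(e_1,e_2)$ evaluates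 to $1^{\min(|w_1|,|w_2|)}$, where $w_i$ is the value of $e_i$. Other expressions evaluate as usual. - Statements evaluate, big-step, to $(\square,\mu')$ with $\square\in\{\top,\bot\}$: - $\mathtt{break}(e)$ yields $\bot$ iff $e$ evaluates to $1$. - A sequence stops on $\bot$. - A conditional takes its first branch iff the guard is $1$. - $\mathtt{while}(e)\{s\}$ returns $(\top,\mu)$ if $e$ is not $1$, and otherwise evaluates $s;\mathtt{while}(e)\{s\}$ to some $(\square,\mu')$ and returns $(\top,\mu')$. - $\pi_c$ denotes the evaluation tree with root $c$; $\sqsubseteq$ and $\sqsubset$ denote the (strict) subtree relations. - $\llbracket\mathtt{P}\rrbracket(\bar w)=\mu'(y)$ when $(\mu_\emptyset[\bar x\leftarrow\bar w],s)$ evaluates to final store $\mu'$. - $\mathtt{P}$ is terminating ($\mathtt{P}\in\mathrm{TERM}$) if $\llbracket\mathtt{P}\rrbracket$ is total. Operator classes ($\mathsf{op}$ of arity $k$). - Neutral: $\llbracket\mathsf{op}\rrbracket$ has values in $\{0,1\}$, or for some $i$, $\llbracket\mathsf{op}\rrbracket(\bar w)\unlhd w_i$ for all $\bar w$. - Positive: $|\llbracket\mathsf{op}\rrbracket(\bar w)|\le\max_i|w_i|+c$ for some constant $c$. - Polynomial: $|\llbracket\mathsf{op}\rrbracket(\bar w)|\le P(\max_i|w_i|)$ for a polynomial $P$. - ''Positive'' means positive and not neutral; ''polynomial'' means polynomial and not positive. Typing judgments. Judgments are $\Gamma,\Delta\vdash^{\tau_{in}}_{\tau_{out}}b:\tau$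 with levels in $\mathbb{N}$, where $\Gamma:\mathbb{V}\to\mathbb{N}$ and $\Delta(\mathsf{op}):\mathbb{N}^2\to\mathcal{P}(\mathbb{N}^{ar(\mathsf{op})+1})$. The rules are: - (VAR) If $\Gamma(x)=\tau$, then $x:\tau$. - (OP) If $\tau_1\to\dots\to\tau_{k+1}\in\Delta(\mathsf{op})(\tau_{in},\tau_{out})$ and $e_i:\tau_i$, then $\mathsf{op}(\bar e):\tau_{k+1}$. - (DCL) If $e_1:\tau_1$, $e_2:\tau_{out}$ and $\tau_1\le\tau\le\tau_{out}$, then $\mathsf{declass}(e_1,e_2):\tau$. - (SUB) Statements may be raised to a higher level. - (SKP) $\mathtt{skip}:0$. - (ASG) If $\Gamma(x)=\tau_1$, $e:\tau_2$, and ($\tau_{out}=0$ or $\tau_1\le\tau_2$), then $x:=e:\tau_1$. - (SEQ), (CND) All components have the same level $\tau$. - (WH) If $\vdash^{\tau}_{\tau_{out}}e:\tau$, $\vdash^{\tau}_{\tau_{out}}s:\tau$ and $1\le\tau\le\tau_{out}$, then $\vdash^{\tau_{in}}_{\tau_{out}}\mathtt{while}(e)\{s\}:\tau$. - (WI) If $\vdash^\tau_\tau e:\tau$, $\vdash^\tau_\tau s:\tau$ and $1\le\tau$, then $\vdash^0_0\mathtt{while}(e)\{s\}:\tau$. - (BRK) If $e:\tau$ and $\tau_{in}\le\tau$, then $\mathtt{break}(e):\tau_{in}$. Safe environments and programs. - $\Delta$ is safe if every operator in $dom(\Delta)$ is neutral, positive or polynomial and polytime computable, and each admissible tuple in $\Delta(\mathsf{op})(\tau_{in},\tau_{out})$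 satisfies: - if neutral, $\tau_{k+1}\le\min_i\tau_i$; - if positive, additionally $\tau_{k+1}<\tau_{in}$ or $\tau_{k+1}=0$; - if polynomial, $\tau_{out}=0$. - $\mathtt{P}\in\mathrm{SAFE}$ iff $\Gamma,\Delta\vdash^0_0\mathrm{body}(\mathtt{P}):\tau$ for some safe $\Delta$, some $\Gamma$ and some $\tau$. Aperiodicity. - $U(x)=\{x\}$, $U(\mathsf{op}(\bar e))=\bigcup U(e_i)$ and $U(\mathsf{declass}(e_1,e_2))=U(e_2)$. - $\mu\equiv_e\mu'$ iff $\mu,\mu'$ agree on $U(e)$. - $\mathtt{P}\in\mathrm{AP}$ iff for no store $\mu$ do there exist $\pi_{(\mu',s')}\sqsupset\pi_{(\mu'',s')}$, both subtrees of $\pi_{(\mu,\mathrm{body}(\mathtt{P}))}$, with $s'=\mathtt{while}(e)\{s''\}$ and $\mu'\equiv_e\mu''$. *)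

From mathcomp Require Import all_boot.
From Stdlib Require Import Relations.Relation_Operators.

Set Implicit Arguments.
Unset Strict Implicit.
Unset Printing Implicit Defensive.

Section Syntax.
Variable O : Type.

Inductive expr : Type :=
| Var of nat
| Op of O & seq expr
| Declass of expr & expr.

Inductive stmt : Type :=
| Skip
| Asg of nat & expr
| Seq of stmt & stmt
| If of expr & stmt & stmt
| While of expr & stmt
| Break of expr.

Record prog : Type := Prog { params : seq nat; body : stmt; ret : nat }.

End Syntax.

Section Lang.
Variable Sigma : finType.
Variables zero one : Sigma.
(* operators: arity and (total) semantics; sem o is only meaningful on
   lists of length ar o *)
Variable O : Type.
Variable ar : O -> nat.
Variable sem : O -> seq (seq Sigma) -> seq Sigma.

Definition word := seq Sigma.
Definition w1 : word := [:: one].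
Definition w0 : word := [:: zero].
Definition bool_w (b : bool) : word := if b then w1 else w0.

Definition is_eq_op o := ar o = 2 /\ forall u v, sem o [:: u; v] = bool_w (u == v).
Definition is_lt_op o := ar o = 2 /\ forall u v, sem o [:: u; v] = bool_w (size u < size v).
Definition is_le_op o := ar o = 2 /\ forall u v, sem o [:: u; v] = bool_w (size u <= size v).
Definition is_zero_op o := ar o = 0 /\ sem o [::] = w0.
Definition is_succ_op o := ar o = 1 /\ forall w, sem o [:: w] = one :: w.
Definition is_pred_op o := ar o = 1 /\ forall w, sem o [:: w] = behead w.
Definition is_not_op o := ar o = 1 /\ forall w, sem o [:: w] = bool_w (w != w1).
Definition is_and_op o :=
  ar o = 2 /\ forall u v, sem o [:: u; v] = bool_w ((u == w1) && (v == w1)).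
Definition is_or_op o :=
  ar o = 2 /\ forall u v, sem o [:: u; v] = bool_w ((u == w1) || (v == w1)).

Definition has_basic_ops : Prop :=
  (exists o, is_eq_op o) /\ (exists o, is_lt_op o) /\ (exists o, is_le_op o) /\
  (exists o, is_zero_op o) /\ (exists o, is_succ_op o) /\ (exists o, is_pred_op o) /\
  (exists o, is_not_op o) /\ (exists o, is_and_op o) /\ (exists o, is_or_op o).

Fixpoint wf_expr (e : expr O) : bool :=
  match e with
  | Var _ => true
  | Op o es => (size es == ar o) && all wf_expr es
  | Declass e1 e2 => wf_expr e1 && wf_expr e2
  end.

Fixpoint wf_stmt (s : stmt O) : bool :=
  match s with
  | Skip => true
  | Asg _ e => wf_expr e
  | Seq s1 s2 => wf_stmt s1 && wf_stmt s2
  | If e s1 s2 => [&& wf_expr e, wf_stmt s1 & wf_stmt s2]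
  | While e s => wf_expr e && wf_stmt s
  | Break e => wf_expr e
  end.

Definition wf_prog (P : prog O) : bool := wf_stmt (body P).

Definition store := nat -> word.
Definition store0 : store := fun _ => [::].
Definition upd (mu : store) (x : nat) (w : word) : store :=
  fun y => if y == x then w else mu y.

Fixpoint eval (mu : store) (e : expr O) : word :=
  match e with
  | Var x => mu x
  | Op o es => sem o (map (eval mu) es)
  | Declass e1 e2 =>
      nseq (minn (size (eval mu e1)) (size (eval mu e2))) one
  end.

(* big-step semantics; flag true = "top" (continue), false = "bot" (break) *)
Inductive exec : store -> stmt O -> bool -> store -> Prop :=
| E_skip mu : exec mu (Skip O) true mu
| E_asg mu x e : exec mu (Asg x e) true (upd mu x (eval mu e))
| E_seq_bot mu s1 s2 mu' : exec mu s1 false mu' -> exec mu (Seq s1 s2) false mu'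
| E_seq_top mu s1 s2 mu' b mu'' :
    exec mu s1 true mu' -> exec mu' s2 b mu'' -> exec mu (Seq s1 s2) b mu''
| E_if_t mu e s1 s2 b mu' :
    eval mu e = w1 -> exec mu s1 b mu' -> exec mu (If e s1 s2) b mu'
| E_if_f mu e s1 s2 b mu' :
    eval mu e <> w1 -> exec mu s2 b mu' -> exec mu (If e s1 s2) b mu'
| E_wh_f mu e s : eval mu e <> w1 -> exec mu (While e s) true mu
| E_wh_t mu e s b mu' :
    eval mu e = w1 -> exec mu (Seq s (While e s)) b mu' -> exec mu (While e s) true mu'
| E_brk mu e : exec mu (Break e) (eval mu e != w1) mu.

Fixpoint init_store (mu : store) (xs : seq nat) (ws : seq word) : store :=
  match xs, ws with
  | x :: xs', w :: ws' => init_store (upd mu x w) xs' ws'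
  | _, _ => mu
  end.

Definition prog_sem (P : prog O) (ws : seq word) (w : word) : Prop :=
  exists b mu', exec (init_store store0 (params P) ws) (body P) b mu' /\ mu' (ret P) = w.

Definition TERM (P : prog O) : Prop :=
  wf_prog P /\
  forall ws, size ws = size (params P) -> exists w, prog_sem P ws w.

Definition same_fun (P Q : prog O) : Prop :=
  size (params P) = size (params Q) /\
  forall ws w, size ws = size (params P) -> (prog_sem P ws w <-> prog_sem Q ws w).

(* The evaluation tree rooted at configuration (mu, s): [child c c'] holds when
   the (unique, possibly infinite) evaluation tree of c has as immediate
   statement-subtree the evaluation tree of c'. *)
Definition conf := (store * stmt O)%type.

Inductive child : conf -> conf -> Prop :=
| C_seq1 mu s1 s2 : child (mu, Seq s1 s2) (mu, s1)
| C_seq2 mu s1 s2 mu' : exec mu s1 true mu' -> child (mu, Seq s1 s2) (mu', s2)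
| C_if_t mu e s1 s2 : eval mu e = w1 -> child (mu, If e s1 s2) (mu, s1)
| C_if_f mu e s1 s2 : eval mu e <> w1 -> child (mu, If e s1 s2) (mu, s2)
| C_wh mu e s : eval mu e = w1 -> child (mu, While e s) (mu, Seq s (While e s)).

Definition subtree (c c' : conf) : Prop := clos_refl_trans conf child c c'.
Definition strict_subtree (c c' : conf) : Prop := clos_trans conf child c c'.

Fixpoint U (e : expr O) : seq nat :=
  match e with
  | Var x => [:: x]
  | Op _ es => flatten (map U es)
  | Declass _ e2 => U e2
  end.

Definition equiv_e (e : expr O) (mu mu' : store) : Prop :=
  forall x, x \in U e -> mu x = mu' x.

Definition AP (P : prog O) : Prop :=
  ~ exists (mu mu' mu'' : store) (e : expr O) (s'' : stmt O),
      subtree (mu, body P) (mu', While e s'') /\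
      subtree (mu, body P) (mu'', While e s'') /\
      strict_subtree (mu', While e s'') (mu'', While e s'') /\
      equiv_e e mu' mu''.

Definition maxlen (ws : seq word) : nat := foldr maxn 0 (map size ws).

Definition neutral (o : O) : Prop :=
  (forall ws, size ws = ar o -> sem o ws = w0 \/ sem o ws = w1) \/
  (exists i, i < ar o /\
     forall ws, size ws = ar o -> infix (sem o ws) (nth [::] ws i)).

Definition positive (o : O) : Prop :=
  exists c, forall ws, size ws = ar o -> size (sem o ws) <= maxlen ws + c.

Definition peval (cs : seq nat) (n : nat) : nat :=
  \sum_(i < size cs) nth 0 cs i * n ^ i.

Definition polynomial (o : O) : Prop :=
  exists cs, forall ws, size ws = ar o -> size (sem o ws) <= peval cs (maxlen ws).

Variant move := MLeft | MRight | MStay.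

Unset Implicit Arguments.
Record TM := {
  tm_state : finType;
  tm_sym : finType;
  tm_in : Sigma -> tm_sym;
  tm_out : tm_sym -> option Sigma;
  tm_blank : tm_sym;
  tm_sep : tm_sym;
  tm_start : tm_state;
  tm_final : pred tm_state;
  tm_delta : tm_state -> tm_sym -> tm_state * tm_sym * move }.

Definition tm_ok (M : TM) : Prop :=
  (forall a, tm_out M (tm_in M a) = Some a) /\
  tm_out M (tm_blank M) = None /\ tm_out M (tm_sep M) = None.

(* configuration: state, left part (reversed), head symbol, right part;
   the tape is two-way infinite, filled with blanks *)
Definition tconf (M : TM) := (tm_state M * seq (tm_sym M) * tm_sym M * seq (tm_sym M))%type.

Definition tm_step (M : TM) (c : tconf M) : tconf M :=
  let: (q, l, h, r) := c in
  if tm_final M q then c else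
  let: (q', h', m) := tm_delta M q h in
  match m with
  | MStay => (q', l, h', r)
  | MLeft => match l with
             | [::] => (q', [::], tm_blank M, h' :: r)
             | a :: l' => (q', l', a, h' :: r)
             end
  | MRight => match r with
              | [::] => (q', h' :: l, tm_blank M, [::])
              | a :: r' => (q', h' :: l, a, r')
              end
  end.

Fixpoint tm_enc (M : TM) (ws : seq word) : seq (tm_sym M) :=
  match ws with
  | [::] => [::]
  | [:: w] => map (tm_in M) w
  | w :: ws' => map (tm_in M) w ++ tm_sep M :: tm_enc M ws'
  end.

Definition tm_init (M : TM) (ws : seq word) : tconf M :=
  match tm_enc M ws with
  | [::] => (tm_start M, [::], tm_blank M, [::])
  | a :: r => (tm_start M, [::], a, r)
  end.

Fixpoint decode_prefix (M : TM) (s : seq (tm_sym M)) : word :=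
  match s with
  | [::] => [::]
  | a :: s' => match tm_out M a with
               | Some x => x :: decode_prefix M s'
               | None => [::]
               end
  end.

Definition tm_output (M : TM) (c : tconf M) : word :=
  let: (_, _, h, r) := c in decode_prefix M (h :: r).

Definition tm_halted (M : TM) (c : tconf M) : bool :=
  let: (q, _, _, _) := c in tm_final M q.

Definition polytime (k : nat) (f : seq word -> word) : Prop :=
  exists M : TM, tm_ok M /\
  exists c d, forall ws, size ws = k ->
    exists n, n <= c * (size (tm_enc M ws)).+1 ^ d /\
      tm_halted M (iter n (tm_step M) (tm_init M ws)) /\
      tm_output M (iter n (tm_step M) (tm_init M ws)) = f ws.

Set Implicit Arguments.

(* Delta o = Some D: o in dom(Delta), D tin tout ts means the tuple ts of
   length ar o + 1 (last = result level) is in Delta(o)(tin,tout). *)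
Definition op_env := O -> option (nat -> nat -> seq nat -> Prop).
Definition var_env := nat -> nat.

Section Typing.
Variable Gamma : var_env.
Variable Delta : op_env.

Inductive etyp (ti tout : nat) : expr O -> nat -> Prop :=
| T_var x : etyp ti tout (Var O x) (Gamma x)
| T_op o es ts t D :
    Delta o = Some D -> D ti tout (rcons ts t) ->
    size es = ar o -> size ts = size es ->
    (forall i, i < size es -> etyp ti tout (nth (Var O 0) es i) (nth 0 ts i)) ->
    etyp ti tout (Op o es) t
| T_dcl e1 e2 t1 t :
    etyp ti tout e1 t1 -> etyp ti tout e2 tout -> t1 <= t <= tout ->
    etyp ti tout (Declass e1 e2) t.

Inductive styp : nat -> nat -> stmt O -> nat -> Prop :=
| T_sub ti tout s t t' : styp ti tout s t -> t <= t' -> styp ti tout s t'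
| T_skp ti tout : styp ti tout (Skip O) 0
| T_asg ti tout x e t2 :
    etyp ti tout e t2 -> (tout = 0 \/ Gamma x <= t2) -> styp ti tout (Asg x e) (Gamma x)
| T_seq ti tout s1 s2 t :
    styp ti tout s1 t -> styp ti tout s2 t -> styp ti tout (Seq s1 s2) t
| T_cnd ti tout e s1 s2 t :
    etyp ti tout e t -> styp ti tout s1 t -> styp ti tout s2 t ->
    styp ti tout (If e s1 s2) t
| T_wh ti tout e s t :
    etyp t tout e t -> styp t tout s t -> 1 <= t <= tout ->
    styp ti tout (While e s) t
| T_wi e s t :
    etyp t t e t -> styp t t s t -> 1 <= t -> styp 0 0 (While e s) t
| T_brk ti tout e t : etyp ti tout e t -> ti <= t -> styp ti tout (Break e) ti.

End Typing.

Definition safe_env (Delta : op_env) : Prop :=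
  forall o D, Delta o = Some D ->
    (neutral o \/ positive o \/ polynomial o) /\ polytime (ar o) (sem o) /\
    (forall ti tout ts, D ti tout ts -> size ts = (ar o).+1) /\
    (forall ti tout targs tr, D ti tout (rcons targs tr) ->
      (neutral o -> all (fun t => tr <= t) targs) /\
      (positive o /\ ~ neutral o ->
         all (fun t => tr <= t) targs /\ (tr < ti \/ tr = 0)) /\
      (polynomial o /\ ~ positive o -> tout = 0)).

Definition SAFE (P : prog O) : Prop :=
  exists Delta Gamma t, safe_env Delta /\ styp Gamma Delta 0 0 (body P) t.

End Lang.

(* Typing makes every loop tiered: inside a loop of level tau, the variables of level
   at least tau only receive values built by neutral operators and declassification,
   namely infixes of their values on entry, the two booleans and unary numerals of
   bounded length.  The guard of the loop therefore ranges over finitely many keys,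
   and aperiodicity, which forbids the guard key of a loop configuration to reappear
   deeper in the evaluation tree, bounds the number of iterations by the number of keys.  The number of keys is polynomial in the size of the high
   variables, so descending through the levels shows that every loop, and then every
   safe aperiodic program, enlarges its store at most polynomially; a terminating
   program mapping 1^n to 1^(2^n) is therefore computed by no such program. *)

From mathcomp Require Import all_boot zify.
From Stdlib Require Import Relations.Relation_Operators Classical.
From Stdlib Require List.

Set Implicit Arguments.
Unset Strict Implicit.
Unset Printing Implicit Defensive.

(** * Polynomial bounds *)

Lemma leq_exp2rW m n e : m <= n -> m ^ e <= n ^ e.
Proof. by case: e => [|e] // h; rewrite leq_exp2r. Qed.

(* Every polynomial with natural coefficients is dominated by some [poly_bound c]. *)
Definition poly_bound (c n : nat) := c * n.+1 ^ c.

Definition poly_bounded (f : nat -> nat) := exists c, forall n, f n <= poly_bound c n.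

Lemma poly_bound1 n : poly_bound 1 n = n.+1.
Proof. by rewrite /poly_bound mul1n expn1. Qed.

Lemma leq_poly_boundl c c' n : c <= c' -> poly_bound c n <= poly_bound c' n.
Proof. by move=> hc; rewrite leq_mul // leq_pexp2l. Qed.

Lemma leq_poly_boundr c n n' : n <= n' -> poly_bound c n <= poly_bound c n'.
Proof. by move=> hn; rewrite leq_mul // leq_exp2rW. Qed.

Lemma leq_const_poly_bound c n : c <= poly_bound c n.
Proof. by rewrite /poly_bound -{1}(muln1 c) leq_mul // expn_gt0. Qed.

Lemma poly_bound_comp a b n :
  poly_bound a (poly_bound b n) <= poly_bound (a * b.+1 ^ a + b * a) n.
Proof.
rewrite /poly_bound.
have h : a * (b * n.+1 ^ b).+1 ^ a <= a * (b.+1 ^ a * n.+1 ^ (b * a)).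
  rewrite leq_mul // expnM -expnMn leq_exp2rW //.
  have : 0 < n.+1 ^ b by rewrite expn_gt0.
  set X := n.+1 ^ b; nia.
apply: leq_trans h _.
rewrite mulnA leq_mul // ?leq_pexp2l //; lia.
Qed.

Lemma poly_bounded_le f g : (forall n, f n <= g n) -> poly_bounded g -> poly_bounded f.
Proof. by move=> h [c hc]; exists c => n; apply: leq_trans (h n) (hc n). Qed.

Lemma poly_bounded_const k : poly_bounded (fun _ => k).
Proof. by exists k => n; apply: leq_const_poly_bound. Qed.

Lemma poly_bounded_id : poly_bounded id.
Proof. by exists 1 => n; rewrite poly_bound1. Qed.

Lemma poly_bounded_poly_bound c : poly_bounded (poly_bound c).
Proof. by exists c. Qed.

Lemma poly_boundedD f g :
  poly_bounded f -> poly_bounded g -> poly_bounded (fun n => f n + g n).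
Proof.
move=> [a ha] [b hb]; exists (a + b) => n; apply: leq_trans (leq_add (ha n) (hb n)) _.
by rewrite /poly_bound mulnDl leq_add // leq_mul // leq_pexp2l // ?leq_addr ?leq_addl.
Qed.

Lemma poly_boundedM f g :
  poly_bounded f -> poly_bounded g -> poly_bounded (fun n => f n * g n).
Proof.
move=> [a ha] [b hb]; exists (a * b + a + b) => n.
apply: leq_trans (leq_mul (ha n) (hb n)) _.
rewrite /poly_bound mulnACA -expnD leq_mul // ?leq_pexp2l //; lia.
Qed.

Lemma poly_boundedX f e : poly_bounded f -> poly_bounded (fun n => f n ^ e).
Proof.
move=> hf; elim: e => [|e IH]; first exact: poly_bounded_const.
by apply: poly_bounded_le (poly_boundedM hf IH) => n; rewrite expnS.
Qed.

Lemma poly_bounded_comp f g :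
  poly_bounded f -> poly_bounded g -> poly_bounded (fun n => f (g n)).
Proof.
move=> [a ha] [b hb]; exists (a * b.+1 ^ a + b * a) => n.
apply: leq_trans (ha (g n)) _; apply: leq_trans (leq_poly_boundr a (hb n)) _.
exact: poly_bound_comp.
Qed.

Lemma poly_bounded_peval cs : poly_bounded (peval cs).
Proof.
exists ((\sum_(i < size cs) nth 0 cs i) + size cs) => n.
apply: (@leq_trans ((\sum_(i < size cs) nth 0 cs i) * n.+1 ^ size cs)).
  rewrite /peval big_distrl /=; apply: leq_sum => i _; apply: leq_mul => //.
  apply: leq_trans (leq_exp2rW _ (leqnSn n)) _; apply: leq_pexp2l => //; exact: ltnW.
by rewrite /poly_bound leq_mul ?leq_addr // leq_pexp2l // leq_addl.
Qed.

Lemma common_bound n (R : nat -> nat -> Prop) :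
  (forall k c c', c <= c' -> R k c -> R k c') ->
  (forall k, k < n -> exists c, R k c) -> exists c, forall k, k < n -> R k c.
Proof.
move=> hmono; elim: n => [|n IH] h; first by exists 0.
have [c1 h1] := IH (fun k hk => h k (ltnW hk)).
have [c2 h2] := h n (ltnSn n).
exists (maxn c1 c2) => k; rewrite ltnS leq_eqVlt => /orP[/eqP ->|hk].
- by apply: hmono h2; rewrite leq_maxr.
- by apply: hmono (h1 k hk); rewrite leq_maxl.
Qed.

Lemma exp2_beats_poly_bound c : exists n, poly_bound c n < 2 ^ n.
Proof.
have sq a : 4 <= a -> a * a <= 2 ^ a.
  elim: a => [|a IH] //; rewrite leq_eqVlt => /orP[/eqP <-|ha] //.
  have := IH ha; rewrite expnS; nia.
exists (2 ^ (c + 5)).-1; rewrite /poly_bound prednK ?expn_gt0 // -expnM.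
apply: (@leq_trans (2 ^ c * 2 ^ ((c + 5) * c))).
  by rewrite ltn_pmul2r ?expn_gt0 // ltn_expl.
rewrite -expnD leq_pexp2l //.
have := sq (c + 5) ltac:(lia); have : 0 < 2 ^ (c + 5) by rewrite expn_gt0.
lia.
Qed.

(** * Sequences *)

Lemma flatten_mapP (T : Type) (A : eqType) (x0 : T) (f : T -> seq A) s y :
  reflect (exists2 i, i < size s & y \in f (nth x0 s i)) (y \in flatten (map f s)).
Proof.
apply: (iffP idP).
- elim: s => [|x s IH] //=; rewrite mem_cat => /orP[hy|/IH [i hi hy]].
  + by exists 0.
  + by exists i.+1.
- case=> i; elim: s i => [|x s IH] [|i] //= hi hy; rewrite mem_cat ?hy //.
  by rewrite (IH i hi hy) orbT.
Qed.

Lemma all_flatten_map_nth (T : Type) (A : eqType) (a : pred A) (x0 : T)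
  (f : T -> seq A) s i : i < size s -> all a (flatten (map f s)) -> all a (f (nth x0 s i)).
Proof. by move=> hi /allP ha; apply/allP => y hy; apply: ha; apply/(flatten_mapP x0); exists i. Qed.

Lemma size_flatten_map_le (T : eqType) (A : Type) (f : T -> seq A) s B :
  (forall x, x \in s -> size (f x) <= B) -> size (flatten (map f s)) <= size s * B.
Proof.
elim: s => [|x s IH] //= hB; rewrite size_cat mulSn leq_add ?hB ?mem_head //.
by apply: IH => y hy; rewrite hB // inE hy orbT.
Qed.

Section Infixes.
Variable T : eqType.

Definition infixes (s : seq T) : seq (seq T) :=
  [seq take l (drop k s) | k <- iota 0 (size s).+1, l <- iota 0 (size s).+1].

Lemma mem_infixes (s r : seq T) : (r \in infixes s) = infix r s.
Proof.
apply/idP/idP.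
- case/allpairsP => -[k l] [_ _ /= ->].
  exact: infix_trans (infix_take _ _) (infix_drop _ _).
- move=> h; have := h; rewrite infixE => /eqP {1}<-.
  apply: (allpairs_f (fun k l => take l (drop k s))); rewrite mem_iota /= ltnS.
  + by rewrite infixTindex.
  + exact: size_infix.
Qed.

Lemma infix_seq1 (a : T) r : infix r [:: a] -> r = [::] \/ r = [:: a].
Proof.
case: r => [|b [|c r]] h; [by left | right | by have := size_infix h].
by have := infixW h; rewrite sub1seq mem_seq1 => /eqP ->.
Qed.

Lemma infix_nseq (a : T) r k : infix r (nseq k a) -> r = nseq (size r) a.
Proof.
move=> h; apply/all_pred1P/allP => y hy.
by have := mem_subseq (infixW h) hy; rewrite mem_nseq => /andP[].
Qed.

Lemma size_infixes (s : seq T) : size (infixes s) = (size s).+1 * (size s).+1.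
Proof. by rewrite /infixes size_allpairs size_iota. Qed.

Fixpoint seqs_of (n : nat) (A : seq T) : seq (seq T) :=
  if n is n'.+1 then [seq a :: l | a <- A, l <- seqs_of n' A] else [:: [::]].

Lemma size_seqs_of n A : size (seqs_of n A) = size A ^ n.
Proof. by elim: n => [|n IH] //=; rewrite size_allpairs IH expnS. Qed.

Lemma mem_seqs_of (A : seq T) (r : seq T) : all (mem A) r -> r \in seqs_of (size r) A.
Proof.
elim: r => [|x r IH] /=; first by rewrite inE.
by case/andP=> hx hr; apply: (allpairs_f (fun a l => a :: l)) => //; apply: IH.
Qed.

End Infixes.

(** * Evaluation trees and loop runs *)

Section Runs.
Variables (Sigma : finType) (one : Sigma) (O : Type)
  (sem : O -> seq (seq Sigma) -> seq Sigma).

Local Notation expr := (expr O).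
Local Notation stmt := (stmt O).
Local Notation store := (store Sigma).
Local Notation conf := (conf Sigma O).
Local Notation w1 := (w1 one).
Local Notation eval := (eval one sem).
Local Notation exec := (exec one sem).
Local Notation subtree := (subtree one sem).
Local Notation strict_subtree := (strict_subtree one sem).

Lemma subtree_trans (a b c : conf) : subtree a b -> subtree b c -> subtree a c.
Proof. exact: rt_trans. Qed.

Lemma subtree_step (a b c : conf) : subtree a b -> child one sem b c -> subtree a c.
Proof. by move=> hab hbc; apply: subtree_trans hab (rt_step _ _ _ _ hbc). Qed.

Lemma strict_subtreeW (a b : conf) : strict_subtree a b -> subtree a b.
Proof. by elim=> [x y h|x y z _ h1 _ h2]; [apply: rt_step | apply: rt_trans h1 h2]. Qed.

Lemma strict_subtree_trans (a b c : conf) :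
  strict_subtree a b -> subtree b c -> strict_subtree a c.
Proof.
move=> hab hbc; elim: hbc a hab => [x y hxy|x|x y z _ IH1 _ IH2] a hax //.
- exact: t_trans hax (t_step _ _ _ _ hxy).
- exact: IH2 (IH1 _ hax).
Qed.

Lemma while_subtree_body mu e s :
  eval mu e = w1 -> subtree (mu, While e s) (mu, s).
Proof.
move=> he; apply: subtree_step (rt_step _ _ _ _ (C_wh _ he)) _; exact: C_seq1.
Qed.

Lemma while_strict_subtree_next mu mu1 e s : eval mu e = w1 -> exec mu s true mu1 ->
  strict_subtree (mu, While e s) (mu1, While e s).
Proof.
by move=> he hx; apply: t_trans (t_step _ _ _ _ (C_wh _ he)) (t_step _ _ _ _ (C_seq2 _ hx)).
Qed.

Definition in_tree (top : stmt) (c : conf) := exists mu, subtree (mu, top) c.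

Lemma in_tree_root top mu : in_tree top (mu, top).
Proof. by exists mu; apply: rt_refl. Qed.

Lemma in_tree_trans top c c' : in_tree top c -> subtree c c' -> in_tree top c'.
Proof. by case=> mu h hcc'; exists mu; apply: subtree_trans h hcc'. Qed.

Lemma in_tree_step top c c' : in_tree top c -> child one sem c c' -> in_tree top c'.
Proof. by move=> h hc; apply: in_tree_trans h (rt_step _ _ _ _ hc). Qed.

Definition aperiodic (top : stmt) := ~ exists mu' mu'' e s,
  [/\ in_tree top (mu', While e s),
      strict_subtree (mu', While e s) (mu'', While e s) & equiv_e e mu' mu''].

Lemma AP_aperiodic (P : prog O) : AP one sem P -> aperiodic (body P).
Proof.
move=> hAP [mu' [mu'' [e [s [[mu h1] h2 h3]]]]]; apply: hAP.
exists mu, mu', mu'', e, s; split=> //; split; last by [].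
exact: subtree_trans h1 (strict_subtreeW h2).
Qed.

Inductive loop_run (e : expr) (s : stmt) : store -> seq store -> store -> Prop :=
| LR_stop mu : eval mu e <> w1 -> loop_run e s mu [:: mu] mu
| LR_break mu mu' : eval mu e = w1 -> exec mu s false mu' -> loop_run e s mu [:: mu] mu'
| LR_step mu mu1 ms mu' : eval mu e = w1 -> exec mu s true mu1 ->
    loop_run e s mu1 ms mu' -> loop_run e s mu (mu :: ms) mu'.

Inductive loop_prefix (e : expr) (s : stmt) : store -> seq store -> Prop :=
| LP_one mu : loop_prefix e s mu [:: mu]
| LP_step mu mu1 ms : eval mu e = w1 -> exec mu s true mu1 ->
    loop_prefix e s mu1 ms -> loop_prefix e s mu (mu :: ms).

Lemma loop_run_prefix e s mu ms mu' : loop_run e s mu ms mu' -> loop_prefix e s mu ms.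
Proof.
by elim=> [m _|m m0 _ _|m m1 ms0 m0 he hx _ IH];
  [apply: LP_one | apply: LP_one | apply: LP_step he hx IH].
Qed.

Lemma exec_loop_run mu e s b mu' :
  exec mu (While e s) b mu' -> exists ms, loop_run e s mu ms mu'.
Proof.
move=> hx; pose W := While e s.
suff : forall s0, exec mu s0 b mu' ->
    (s0 = W -> exists ms, loop_run e s mu ms mu') /\
    (s0 = Seq s W -> eval mu e = w1 -> exists ms, loop_run e s mu ms mu').
  by move=> /(_ _ hx) [+ _]; apply.
move=> s0 {}hx; elim: hx => //= {mu s0 b mu'}.
- move=> mu s1 s2 mu' h _; split=> // -[? ?] he; subst.
  by exists [:: mu]; apply: LR_break.
- move=> mu s1 s2 mu' b mu'' h1 _ _ [IH _]; split=> // -[? ?] he; subst.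
  by have [ms hms] := IH erefl; exists (mu :: ms); apply: LR_step h1 hms.
- by move=> mu e0 s0 he; split=> // -[? ?]; subst; exists [:: mu]; apply: LR_stop.
- by move=> mu e0 s0 b mu' he _ [_ IH]; split=> // -[? ?]; subst; apply: IH.
Qed.

Lemma loop_run_Forall (I : store -> Prop) e s mu ms mu' :
  (forall m b m', exec m s b m' -> I m -> I m') ->
  loop_run e s mu ms mu' -> I mu -> List.Forall I (mu' :: ms).
Proof.
move=> hI; elim=> [m _|m m' _ hx|m m1 ms0 m' _ hx _ IH] hm.
- by repeat constructor.
- by repeat constructor=> //; apply: hI hx hm.
- have /List.Forall_cons_iff [hm' hms] := IH (hI _ _ _ hx hm).
  by repeat constructor.
Qed.

Definition guard_key (e : expr) (mu : store) : seq (word Sigma) := map mu (U e).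

Lemma loop_prefix_subtree e s mu ms i : loop_prefix e s mu ms -> i < size ms ->
  subtree (mu, While e s) (nth mu ms i, While e s).
Proof.
move=> hp; elim: hp i => [m|m m1 ms' he hx _ IH] [|i] //= hi; try exact: rt_refl.
apply: subtree_trans (strict_subtreeW (while_strict_subtree_next he hx)) _.
by rewrite (set_nth_default m1) //; apply: IH.
Qed.

Lemma loop_prefix_uniq_keys top e s mu ms : aperiodic top ->
  in_tree top (mu, While e s) -> loop_prefix e s mu ms -> uniq (map (guard_key e) ms).
Proof.
move=> hAP + hp; elim: hp => [//|m m1 ms' he hx hp IH] hr /=.
have hstep := while_strict_subtree_next he hx.
rewrite IH ?andbT; last exact: in_tree_trans hr (strict_subtreeW hstep).
apply/negP => hin; apply: hAP.
set i := index (guard_key e m) (map (guard_key e) ms').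
have hi : i < size ms' by rewrite -(size_map (guard_key e)) index_mem.
have hkey : guard_key e (nth m1 ms' i) = guard_key e m.
  by rewrite -(nth_map m1 (guard_key e m1)) // nth_index.
exists m, (nth m1 ms' i), e, s; split=> //.
  exact: strict_subtree_trans hstep (loop_prefix_subtree hp hi).
by move=> x hxU; move/eq_in_map: hkey => /(_ x hxU) ->.
Qed.

Lemma loop_prefix_size top e s mu ms (F : seq (seq (word Sigma))) :
  aperiodic top -> in_tree top (mu, While e s) -> loop_prefix e s mu ms ->
  List.Forall (fun m => guard_key e m \in F) ms -> size ms <= size F.
Proof.
move=> hAP hr hp hF; rewrite -(size_map (guard_key e)).
apply: uniq_leq_size (loop_prefix_uniq_keys hAP hr hp) _.
by elim: hF => [|m ms' hm _ IH] //= k; rewrite inE => /orP[/eqP ->|/IH].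
Qed.

Lemma exec_Skip_inv mu b mu' : exec mu (Skip O) b mu' -> mu' = mu.
Proof. by move=> h; inversion h. Qed.

Lemma exec_Break_inv mu e b mu' : exec mu (Break e) b mu' -> mu' = mu.
Proof. by move=> h; inversion h. Qed.

Lemma exec_Asg_inv mu x e b mu' : exec mu (Asg x e) b mu' -> mu' = upd mu x (eval mu e).
Proof. by move=> h; inversion h. Qed.

Lemma exec_Seq_inv mu s1 s2 b mu' : exec mu (Seq s1 s2) b mu' ->
  exec mu s1 false mu' \/ exists2 mu1, exec mu s1 true mu1 & exec mu1 s2 b mu'.
Proof. by move=> h; inversion h; subst; [left | right; exists mu'0]. Qed.

Lemma exec_If_inv mu e s1 s2 b mu' : exec mu (If e s1 s2) b mu' ->
  (eval mu e = w1 /\ exec mu s1 b mu') \/ (eval mu e <> w1 /\ exec mu s2 b mu').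
Proof. by move=> h; inversion h; subst; [left | right]. Qed.

End Runs.

(** * Typing *)

Section Typing.
Variables (Sigma : finType) (zero one : Sigma) (O : Type) (ar : O -> nat)
  (sem : O -> seq (seq Sigma) -> seq Sigma).
Variables (Gamma : var_env) (Delta : op_env O).

Local Notation expr := (expr O).
Local Notation stmt := (stmt O).
Local Notation word := (word Sigma).
Local Notation store := (store Sigma).
Local Notation w0 := (w0 zero).
Local Notation w1 := (w1 one).
Local Notation eval := (eval one sem).
Local Notation exec := (exec one sem).
Local Notation etyp := (etyp ar Gamma Delta).
Local Notation styp := (styp ar Gamma Delta).
Local Notation in_tree := (in_tree one sem).
Local Notation aperiodic := (aperiodic one sem).

Lemma styp_Seq_inv ti tout s1 s2 t : styp ti tout (Seq s1 s2) t ->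
  exists2 t0, t0 <= t & styp ti tout s1 t0 /\ styp ti tout s2 t0.
Proof.
move=> H; remember (Seq s1 s2) as s0 eqn:E; elim: H E => // {ti tout s0 t}.
- by move=> ti tout s t t' _ IH htt' /IH [t0 h1 h2]; exists t0 => //; apply: leq_trans htt'.
- by move=> ti tout s3 s4 t h1 _ h2 _ [<- <-]; exists t.
Qed.

Lemma styp_If_inv ti tout e s1 s2 t : styp ti tout (If e s1 s2) t ->
  exists2 t0, t0 <= t & [/\ etyp ti tout e t0, styp ti tout s1 t0 & styp ti tout s2 t0].
Proof.
move=> H; remember (If e s1 s2) as s0 eqn:E; elim: H E => // {ti tout s0 t}.
- by move=> ti tout s t t' _ IH htt' /IH [t0 h1 h2]; exists t0 => //; apply: leq_trans htt'.
- by move=> ti tout e0 s3 s4 t he h1 _ h2 _ [<- <- <-]; exists t.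
Qed.

Lemma styp_Asg_inv ti tout x e t : styp ti tout (Asg x e) t ->
  exists t2, [/\ etyp ti tout e t2, tout = 0 \/ Gamma x <= t2 & Gamma x <= t].
Proof.
move=> H; remember (Asg x e) as s0 eqn:E; elim: H E => // {ti tout s0 t}.
- move=> ti tout s t t' _ IH htt' /IH [t2 [h1 h2 h3]].
  by exists t2; split=> //; apply: leq_trans htt'.
- by move=> ti tout y e0 t2 he hx [<- <-]; exists t2.
Qed.

(* A loop typed at level [tau] in context [(ti, tout)] was typed by (WH), in which
   case its inner context [tout'] is [tout], or by (WI), where [ti = tout = 0]. *)
Lemma styp_While_inv ti tout e s t : styp ti tout (While e s) t ->
  exists tau tout', [/\ etyp tau tout' e tau, styp tau tout' s tau, 1 <= tau <= tout',
    tau <= t & tout' = tout \/ tout = 0 /\ ti = 0].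
Proof.
move=> H; remember (While e s) as s0 eqn:E; elim: H E => // {ti tout s0 t}.
- move=> ti tout s0 t t' _ IH htt' /IH [tau [tout' [h1 h2 h3 h4 h5]]].
  by exists tau, tout'; split=> //; apply: leq_trans htt'.
- by move=> ti tout e0 s0 t he hs _ ht [<- <-]; exists t, tout; split=> //; left.
- by move=> e0 s0 t he hs _ ht [<- <-]; exists t, t; split=> //; [rewrite ht leqnn | right].
Qed.

Lemma etyp_wf ti tout e t : etyp ti tout e t -> wf_expr ar e.
Proof.
elim=> //= [o es ts t0 D _ _ hes _ _ IH|e1 e2 t1 t0 _ IH1 _ IH2 _].
- by rewrite hes eqxx; apply/(all_nthP (Var O 0)) => i hi; apply: IH.
- by rewrite IH1 IH2.
Qed.

Lemma styp_wf ti tout s t : styp ti tout s t -> wf_stmt ar s.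
Proof.
elim=> //= {ti tout s t}.
- by move=> ti tout x e t2 /etyp_wf.
- by move=> ti tout s1 s2 t _ -> _ ->.
- by move=> ti tout e s1 s2 t /etyp_wf -> _ -> _ ->.
- by move=> ti tout e s t /etyp_wf -> _ ->.
- by move=> e s t /etyp_wf -> _ ->.
- by move=> ti tout e t /etyp_wf.
Qed.

Fixpoint varsE (e : expr) : seq nat :=
  match e with
  | Var x => [:: x]
  | Op _ es => flatten (map varsE es)
  | Declass e1 e2 => varsE e1 ++ varsE e2
  end.

Fixpoint varsS (s : stmt) : seq nat :=
  match s with
  | Skip => [::]
  | Asg x e => x :: varsE e
  | Seq s1 s2 => varsS s1 ++ varsS s2
  | If e s1 s2 => varsE e ++ varsS s1 ++ varsS s2
  | While e s => varsE e ++ varsS s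
  | Break e => varsE e
  end.

(* Typability only provides an induction principle through the nested [Op] case. *)
Lemma etyp_U_varsE ti tout e t : etyp ti tout e t -> {subset U e <= varsE e}.
Proof.
elim=> [x|o es ts t0 D _ _ _ _ _ IH|e1 e2 t1 t0 _ _ _ IH2 _] y //=.
- by case/(flatten_mapP (Var O 0)) => i hi /IH-/(_ hi) hy; apply/(flatten_mapP (Var O 0)); exists i.
- by rewrite mem_cat => /IH2 ->; rewrite orbT.
Qed.

Hypothesis safeD : safe_env zero one ar sem Delta.

Lemma safe_op_cases o D ti tout ts t : Delta o = Some D -> D ti tout (rcons ts t) ->
  [\/ neutral zero one ar sem o /\ all (leq t) ts,
      [/\ positive ar sem o, all (leq t) ts & t < ti \/ t = 0]
    | polynomial ar sem o /\ tout = 0].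
Proof.
move=> hD hts; have [hcl [_ [_ h]]] := safeD hD.
have [hn [hp hq]] := h _ _ _ _ hts.
case: (classic (neutral zero one ar sem o)) => Hn; first by constructor 1; split=> //; apply: hn.
case: (classic (positive ar sem o)) => Hp; first by constructor 2; split; case: (hp (conj Hp Hn)).
by constructor 3; case: hcl => [//|[//|hpoly]]; split=> //; apply: hq.
Qed.

(* Positive operators produce levels below [ti] or [0], polynomial ones need [tout = 0]. *)
Lemma high_op_neutral o D ti tout ts t K : Delta o = Some D -> D ti tout (rcons ts t) ->
  ti <= K <= t -> 0 < K -> 0 < tout -> neutral zero one ar sem o /\ all (leq t) ts.
Proof.
move=> hD hts /andP[hti hKt] hK hto.
case: (safe_op_cases hD hts) => [//|[_ _ [hlt|ht0]]|[_ h0]].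
- by have := leq_ltn_trans hKt (leq_trans hlt hti); rewrite ltnn.
- by move: hK; rewrite ltnNge (leq_trans hKt) // ht0.
- by move: hto; rewrite h0.
Qed.

Lemma etyp_U_above ti tout e t K : etyp ti tout e t -> ti <= K <= t -> 0 < K -> 0 < tout ->
  forall x, x \in U e -> K <= Gamma x.
Proof.
elim=> [x|o es ts t0 D hD hts hes hsz _ IH|e1 e2 t1 t0 _ _ _ IH2 /andP[_ ht0]] hK hK0 hto y.
- by rewrite inE => /eqP ->; case/andP: hK.
- case/(flatten_mapP (Var O 0)) => i hi; have [_ hall] := high_op_neutral hD hts hK hK0 hto.
  apply: (IH i hi) => //; case/andP: hK => -> /= hKt; apply: leq_trans hKt _.
  by apply: (all_nthP 0 hall); rewrite hsz.
- by apply: IH2 => //; case/andP: hK => -> /= hKt; apply: leq_trans ht0.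
Qed.

(* A set of words that can contain every value computed by neutral operators and
   declassification from its elements. *)
Definition value_closed (P : word -> Prop) :=
  [/\ forall w v, P w -> infix v w -> P v, P w0, P w1 &
      forall w k, P w -> k <= size w -> P (nseq k one)].

Variable V : seq nat.

Definition above (K : nat) (P : word -> Prop) (mu : store) :=
  forall x, x \in V -> K <= Gamma x -> P (mu x).

Lemma eval_above_closed P K mu ti tout e t : value_closed P -> above K P mu ->
  etyp ti tout e t -> ti <= K <= t -> 0 < K -> 0 < tout -> all (mem V) (varsE e) ->
  P (eval mu e).
Proof.
move=> [Pinf P0 P1 Pn] hP.
elim=> [x|o es ts t0 D hD hts hes hsz _ IH|e1 e2 t1 t0 _ _ _ IH2 /andP[_ ht0]] hK hK0 hto hV.
- by case/andP: hK => _ hx; apply: hP hx; rewrite /= andbT in hV.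
- have [[hb|[i [hi hinf]]] hall] := high_op_neutral hD hts hK hK0 hto.
    by case: (hb (map (eval mu) es)); rewrite ?size_map //= => ->.
  have := hinf (map (eval mu) es); rewrite size_map => /(_ hes).
  rewrite (nth_map (Var O 0)) ?hes //.
  apply: Pinf; rewrite -hes in hi; apply: (IH i hi) => //.
    case/andP: hK => -> /= hKt; apply: leq_trans hKt _.
    by apply: (all_nthP 0 hall); rewrite hsz.
  exact: all_flatten_map_nth.
- rewrite /= all_cat in hV; case/andP: hV => _ hV2.
  apply: (Pn (eval mu e2)); last by rewrite geq_minr.
  by apply: IH2 => //; case/andP: hK => -> /= hKt; apply: leq_trans ht0.
Qed.

Lemma exec_above_closed P K mu s b mu' ti tout t : value_closed P -> exec mu s b mu' ->
  styp ti tout s t -> 0 < tout -> ti <= K -> t <= K -> 0 < K -> all (mem V) (varsS s) ->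
  above K P mu -> above K P mu'.
Proof.
move=> hP hx; elim: hx ti t => // {mu s b mu'}
  [mu x e|mu s1 s2 mu' _ IH|mu s1 s2 mu' b mu'' _ IH1 _ IH2
  |mu e s1 s2 b mu' _ _ IH|mu e s1 s2 b mu' _ _ IH|mu e s b mu' _ _ IH]
  ti t Hty hto hti htK hK /=.
- case/styp_Asg_inv: Hty => t2 [he [h0|hxt2] _]; first by move: hto; rewrite h0.
  case/andP=> _ hVe hmu y hy hKy; rewrite /upd; case: (y =P x) => [eqyx|_]; last exact: hmu.
  subst y; apply: (eval_above_closed hP hmu he) => //.
  by rewrite hti (leq_trans hKy hxt2).
- case/styp_Seq_inv: Hty => t0 ht0 [h1 _]; rewrite all_cat => /andP[hV1 _].
  exact: (IH _ _ h1 hto hti (leq_trans ht0 htK) hK hV1).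
- case/styp_Seq_inv: Hty => t0 ht0 [h1 h2]; rewrite all_cat => /andP[hV1 hV2] hmu.
  have ht0K := leq_trans ht0 htK.
  exact: (IH2 _ _ h2 hto hti ht0K hK hV2 (IH1 _ _ h1 hto hti ht0K hK hV1 hmu)).
- case/styp_If_inv: Hty => t0 ht0 [_ h1 _]; rewrite !all_cat => /and3P[_ hV1 _].
  exact: (IH _ _ h1 hto hti (leq_trans ht0 htK) hK hV1).
- case/styp_If_inv: Hty => t0 ht0 [_ _ h2]; rewrite !all_cat => /and3P[_ _ hV2].
  exact: (IH _ _ h2 hto hti (leq_trans ht0 htK) hK hV2).
- case/styp_While_inv: Hty => tau [tout' [he hs htau htaut [htout'|[h0 _]]]]; last first.
    by move: hto; rewrite h0.
  subst tout'; have htauK := leq_trans htaut htK.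
  have hbody : styp tau tout (Seq s (While e s)) tau by apply: T_seq => //; apply: T_wh.
  rewrite all_cat => /andP[hVe hVs]; apply: (IH _ _ hbody hto htauK htauK hK).
  by rewrite /= !all_cat hVe hVs.
Qed.

Definition value_pool K N mu : seq word :=
  flatten [seq infixes (mu x) | x <- [seq x <- V | K <= Gamma x]] ++
  [:: w0; w1] ++ mkseq (fun k => nseq k one) N.+1.

Lemma mem_value_pool K N mu w : (w \in value_pool K N mu) =
  [|| w \in flatten [seq infixes (mu x) | x <- [seq x <- V | K <= Gamma x]],
      w \in [:: w0; w1] | w \in mkseq (fun k => nseq k one) N.+1].
Proof. by rewrite !mem_cat. Qed.

Lemma mem_value_pool_nseq K N mu k : k <= N -> nseq k one \in value_pool K N mu.
Proof. by move=> hk; rewrite mem_value_pool; apply/or3P/Or33/mapP; exists k; rewrite ?mem_iota. Qed.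

Lemma value_pool_above K N mu : above K (fun w => w \in value_pool K N mu) mu.
Proof.
move=> x hx hK; rewrite mem_value_pool; apply/or3P/Or31/flattenP.
exists (infixes (mu x)); first by apply/mapP; exists x; rewrite // mem_filter hK.
by rewrite mem_infixes infix_refl.
Qed.

Section PoolOfBoundedStore.
Variables (K N : nat) (mu : store).
Hypotheses (hN : 0 < N) (hmuN : above K (fun w => size w <= N) mu).

Lemma value_pool_size w : w \in value_pool K N mu -> size w <= N.
Proof.
rewrite mem_value_pool => /or3P[|hw|].
- case/flattenP => ws /mapP [x]; rewrite mem_filter => /andP[hK hx] -> hw.
  by rewrite mem_infixes in hw; apply: leq_trans (size_infix hw) (hmuN hx hK).
- by move: hw; rewrite !inE => /orP[] /eqP ->.
- by case/mapP => k; rewrite mem_iota /= => hk ->; rewrite size_nseq.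
Qed.

Lemma value_pool_closed : value_closed (fun w => w \in value_pool K N mu).
Proof.
split.
- move=> w v hw hvw; move: (hw); rewrite mem_value_pool => /or3P[|hw01|].
  + case/flattenP => ws /mapP [x hx ->]; rewrite mem_infixes => hwx.
    rewrite mem_value_pool; apply/or3P/Or31/flattenP; exists (infixes (mu x)).
      by apply/mapP; exists x.
    by rewrite mem_infixes (infix_trans hvw hwx).
  + move: hw01; rewrite !inE => /orP[] /eqP hw01; subst w;
      case/infix_seq1: hvw => ->; by [apply: (mem_value_pool_nseq _ _ (k := 0)) | ].
  + case/mapP => k; rewrite mem_iota /= ltnS => hk hwk; subst w.
    rewrite (infix_nseq hvw); apply: mem_value_pool_nseq.
    by apply: leq_trans (size_infix hvw) _; rewrite size_nseq.
- by rewrite mem_value_pool inE eqxx orbT.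
- by rewrite mem_value_pool !inE eqxx !orbT.
- move=> w k hw hk; apply: mem_value_pool_nseq; exact: leq_trans hk (value_pool_size hw).
Qed.

Lemma size_value_pool : size (value_pool K N mu) <= size V * (N.+1 * N.+1) + N.+3.
Proof.
have hflat : size (flatten [seq infixes (mu x) | x <- [seq x <- V | K <= Gamma x]])
    <= size V * (N.+1 * N.+1).
  apply: leq_trans (size_flatten_map_le (B := N.+1 * N.+1) _) _.
    move=> x; rewrite mem_filter => /andP[hK hx].
    by rewrite size_infixes leq_mul ?ltnS ?hmuN.
  by rewrite leq_mul2r size_filter count_size orbT.
by rewrite !size_cat size_mkseq /= add2n leq_add2r.
Qed.

End PoolOfBoundedStore.

Definition max_size (j : nat) (mu : store) := \max_(x <- V | j <= Gamma x) size (mu x).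

Lemma max_size_leq j mu m :
  (max_size j mu <= m) <-> above j (fun w => size w <= m) mu.
Proof.
split=> [hm x hx hj|hm]; last exact/bigmax_leqP_seq.
by apply: leq_trans hm; apply: (@leq_bigmax_seq _ _ (fun x => j <= Gamma x) (fun x => size (mu x))).
Qed.

Lemma above_max_size j mu : above j (fun w => size w <= max_size j mu) mu.
Proof. exact/max_size_leq. Qed.

Lemma leq_max_size_level j j' mu : j <= j' -> max_size j' mu <= max_size j mu.
Proof. by move=> hj; apply/max_size_leq => x hx hj'; apply: above_max_size (leq_trans hj hj'). Qed.

Lemma max_size_upd j mu x w m : (j <= Gamma x -> size w <= m) -> max_size j mu <= m ->
  max_size j (upd mu x w) <= m.
Proof.
move=> hw /max_size_leq hm; apply/max_size_leq => y hy hj; rewrite /upd.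
by case: (y =P x) => [eqyx|_]; [subst y; apply: hw | apply: hm].
Qed.

Lemma above_maxn1_max_size j mu : above j (fun w => size w <= maxn 1 (max_size j mu)) mu.
Proof. by move=> x hx hj; rewrite leq_max above_max_size ?orbT. Qed.

Lemma size_value_closed N : 0 < N -> value_closed (fun w => size w <= N).
Proof.
move=> hN; split=> // [w v hw hvw|w k hw hk].
- exact: leq_trans (size_infix hvw) hw.
- by rewrite size_nseq; apply: leq_trans hk hw.
Qed.

(** * Loops *)

(* The tiered size invariant: level [j] grows by a polynomial in the higher levels only. *)
Definition step_bounded (top : stmt) (s : stmt) (c : nat) :=
  forall mu b mu', in_tree top (mu, s) -> exec mu s b mu' ->
  forall j, max_size j mu' <= max_size j mu + poly_bound c (max_size j.+1 mu).

Section Loop.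
Variables (top : stmt) (e : expr) (s : stmt) (tau tout' : nat).
Hypotheses (hAP : aperiodic top) (he : etyp tau tout' e tau)
  (hs : styp tau tout' s tau) (htau : 1 <= tau <= tout')
  (hV : all (mem V) (varsS (While e s))).

Local Notation W := (While e s).

Lemma body_above_closed P K m b m' : value_closed P -> tau <= K -> exec m s b m' ->
  above K P m -> above K P m'.
Proof.
case/andP: htau => h1 h2 hP hK hx; apply: (exec_above_closed hP hx hs) => //.
- exact: leq_trans h1 h2.
- exact: leq_trans h1 hK.
- by move: hV; rewrite /= all_cat => /andP[].
Qed.

(* The values of the guard variables stay in a finite pool determined by the store
   on entry, since the body only applies neutral operators to high variables. *)
Definition guard_pool (mu : store) := value_pool tau (maxn 1 (max_size tau mu)) mu.

Definition guard_keys (mu : store) := seqs_of (size (U e)) (guard_pool mu).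

Lemma guard_pool_closed mu : value_closed (fun w => w \in guard_pool mu).
Proof. by apply: value_pool_closed; [rewrite leq_max | apply: above_maxn1_max_size]. Qed.

Lemma guard_key_mem mu m : above tau (fun w => w \in guard_pool mu) m ->
  guard_key e m \in guard_keys mu.
Proof.
move=> hm; rewrite /guard_keys -(size_map m); apply: mem_seqs_of; apply/allP => w.
case/mapP => x hx ->; case/andP: htau => h1 h2; apply: hm.
- by move: hV; rewrite /= all_cat => /andP[/allP hVe _]; apply/hVe/(etyp_U_varsE he).
- by apply: (etyp_U_above he) => //; [rewrite leqnn | apply: leq_trans h2].
Qed.

Lemma loop_run_guard_keys mu ms mu' : loop_run one sem e s mu ms mu' ->
  List.Forall (fun m => guard_key e m \in guard_keys mu) ms.
Proof.
move=> hrun; have hI m b m' := @body_above_closed _ _ m b m' (guard_pool_closed mu) (leqnn tau).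
have hms := List.Forall_inv_tail (loop_run_Forall hI hrun (value_pool_above _ _)).
by apply: List.Forall_impl hms => m; apply: guard_key_mem.
Qed.

Lemma loop_terminates : (forall m, in_tree top (m, s) -> exists b m', exec m s b m') ->
  forall mu, in_tree top (mu, W) -> exists mu', exec mu W true mu'.
Proof.
move=> hbody mu hr.
pose I := above tau (fun w => w \in guard_pool mu).
have claim n m : in_tree top (m, W) -> I m -> (exists m', exec m W true m') \/
    exists ms, [/\ loop_prefix one sem e s m ms, size ms = n.+1 &
                   List.Forall (fun m => guard_key e m \in guard_keys mu) ms].
  elim: n m => [|n IH] m hm hIm.
    by right; exists [:: m]; split; [apply: LP_one | | repeat constructor; apply: guard_key_mem].
  case: (eval m e =P w1) => hg; last by left; exists m; apply: E_wh_f.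
  have [[] [m1 hx]] := hbody _ (in_tree_trans hm (while_subtree_body _ hg)); last first.
    by left; exists m1; apply: E_wh_t hg _; apply: E_seq_bot.
  have hm1 := in_tree_trans hm (strict_subtreeW (while_strict_subtree_next hg hx)).
  case: (IH m1 hm1 (body_above_closed (guard_pool_closed mu) (leqnn _) hx hIm)).
    by case=> m' hm'; left; exists m'; apply: E_wh_t hg _; apply: E_seq_top hx hm'.
  case=> ms [hp hsz hkeys]; right; exists (m :: ms); split; first exact: LP_step hg hx hp.
    by rewrite /= hsz.
  by constructor=> //; apply: guard_key_mem.
case: (claim (size (guard_keys mu)) mu hr (value_pool_above _ _)) => // -[ms [hp hsz hkeys]].
by have := loop_prefix_size hAP hr hp hkeys; rewrite hsz ltnn.
Qed.

(* Aperiodicity bounds the number of iterations by the number of possible guard keys. *)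
Lemma loop_run_size : exists cQ, forall mu ms mu', in_tree top (mu, W) ->
  loop_run one sem e s mu ms mu' -> size ms <= poly_bound cQ (max_size tau mu).
Proof.
pose g n := size V * ((n + 2) * (n + 2)) + (n + 4).
have [cQ hcQ] : poly_bounded (fun n => g n ^ size (U e)).
  apply: poly_boundedX; apply: poly_boundedD.
  - apply: poly_boundedM; first exact: poly_bounded_const.
    by apply: poly_boundedM; apply: (poly_boundedD poly_bounded_id (poly_bounded_const 2)).
  - exact: (poly_boundedD poly_bounded_id (poly_bounded_const 4)).
exists cQ => mu ms mu' hr hrun.
apply: leq_trans (loop_prefix_size hAP hr (loop_run_prefix hrun) (loop_run_guard_keys hrun)) _.
rewrite size_seqs_of; apply: leq_trans (hcQ _); apply: leq_exp2rW.
apply: leq_trans (size_value_pool (above_maxn1_max_size mu)) _.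
have : maxn 1 (max_size tau mu) <= (max_size tau mu).+1 by rewrite geq_max ltnS leqnSn.
rewrite /g; set N := maxn 1 _; move=> hN.
by rewrite leq_add ?leq_mul // ?addn2 ?addn4 ?ltnS.
Qed.

Lemma loop_run_above_size K mu ms mu' : tau <= K -> loop_run one sem e s mu ms mu' ->
  List.Forall (fun m => max_size K m <= maxn 1 (max_size K mu)) (mu' :: ms).
Proof.
move=> hK hrun; have hc := size_value_closed (leq_maxl 1 (max_size K mu)).
have := loop_run_Forall (fun m b m' hx => body_above_closed hc hK hx) hrun
  (above_maxn1_max_size mu).
by apply: List.Forall_impl => m /max_size_leq.
Qed.

Section LoopBound.
Variable cb : nat.
Hypothesis hbody : step_bounded top s cb.

Lemma loop_run_level_growth j G mu ms mu' : loop_run one sem e s mu ms mu' ->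
  in_tree top (mu, W) -> List.Forall (fun m => max_size j.+1 m <= G) ms ->
  List.Forall (fun m => max_size j m <= max_size j mu + size ms * poly_bound cb G) (mu' :: ms).
Proof.
have step m b m1 : in_tree top (m, W) -> eval m e = w1 -> exec m s b m1 ->
    max_size j.+1 m <= G -> max_size j m1 <= max_size j m + poly_bound cb G.
  move=> hr hg hx hG; apply: leq_trans (hbody (in_tree_trans hr (while_subtree_body _ hg)) hx j) _.
  by rewrite leq_add2l leq_poly_boundr.
elim=> {mu ms mu'} [m hg|m m' hg hx|m m1 ms m' hg hx hrun IH] hr hG /=.
- by rewrite mul1n; repeat constructor; rewrite leq_addr.
- have hGm := List.Forall_inv hG; rewrite mul1n.
  by repeat constructor; [apply: step hr hg hx hGm | rewrite leq_addr].
- case/List.Forall_cons_iff: hG => hGm hGms.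
  have h1 := step _ _ _ hr hg hx hGm.
  have hle y : y <= max_size j m1 + size ms * poly_bound cb G ->
      y <= max_size j m + (size ms).+1 * poly_bound cb G.
    by move=> hy; apply: leq_trans hy _; rewrite mulSn addnA leq_add2r.
  have := IH (in_tree_trans hr (strict_subtreeW (while_strict_subtree_next hg hx))) hGms.
  case/List.Forall_cons_iff => hm' hms; constructor; first exact: hle.
  constructor; first by rewrite leq_addr.
  by apply: List.Forall_impl hms => y; apply: hle.
Qed.

Definition level_bounded k c := forall mu ms mu', loop_run one sem e s mu ms mu' ->
  in_tree top (mu, W) ->
  List.Forall (fun m => max_size (tau - k) m <= poly_bound c (max_size (tau - k) mu)) (mu' :: ms).

Lemma level_bounded_mono k c c' : c <= c' -> level_bounded k c -> level_bounded k c'.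
Proof.
move=> hc h mu ms mu' hrun hr; apply: List.Forall_impl (h mu ms mu' hrun hr) => m hm.
exact: leq_trans hm (leq_poly_boundl _ hc).
Qed.

(* Descending from [tau]: the levels above [j] are bounded by induction, and the
   number of iterations by [loop_run_size]. *)
Lemma loop_levels_bounded k : k <= tau -> exists c, level_bounded k c.
Proof.
elim: k => [|k IH] hk.
  exists 1 => mu ms mu' hrun hr; rewrite subn0.
  apply: List.Forall_impl (loop_run_above_size (leqnn tau) hrun) => m hm.
  by apply: leq_trans hm _; rewrite poly_bound1 geq_max ltnS leqnSn.
have [c IHc] := IH (ltnW hk).
have [cQ hcQ] := loop_run_size.
have [c' hc'] : poly_bounded (fun n => n + poly_bound cQ n * poly_bound cb (poly_bound c n)).
  apply: (poly_boundedD poly_bounded_id (poly_boundedM (poly_bounded_poly_bound cQ) _)).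
  exact: poly_bounded_comp (poly_bounded_poly_bound cb) (poly_bounded_poly_bound c).
exists c' => mu ms mu' hrun hr.
have hj : tau - k = (tau - k.+1).+1 by rewrite subnSK.
set j := tau - k.+1 in hj *.
have hhigh := IHc mu ms mu' hrun hr; rewrite hj in hhigh.
have hgrow := loop_run_level_growth hrun hr (List.Forall_inv_tail hhigh).
apply: List.Forall_impl hgrow => m hm; apply: leq_trans hm _.
apply: leq_trans (hc' _); rewrite leq_add2l; apply: leq_mul.
- apply: leq_trans (hcQ _ _ _ hr hrun) _.
  by apply: leq_poly_boundr; apply: leq_max_size_level; rewrite /j leq_subr.
- by apply: leq_poly_boundr; apply: leq_poly_boundr; apply: leq_max_size_level.
Qed.

Lemma loop_step_bounded : exists c, step_bounded top W c.
Proof.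
have [cD hD] := common_bound level_bounded_mono
  (fun k (hk : k < tau.+1) => loop_levels_bounded hk).
have [cQ hcQ] := loop_run_size.
have [c hc] : poly_bounded (fun n => 1 + poly_bound cQ n * poly_bound cb (poly_bound cD n)).
  apply: (poly_boundedD (poly_bounded_const 1) (poly_boundedM (poly_bounded_poly_bound cQ) _)).
  exact: poly_bounded_comp (poly_bounded_poly_bound cb) (poly_bounded_poly_bound cD).
exists c => mu b mu' hr hx j.
have [ms hrun] := exec_loop_run hx.
case: (leqP tau j) => hj.
  apply: leq_trans (List.Forall_inv (loop_run_above_size hj hrun)) _.
  rewrite geq_max leq_addr andbT; apply: leq_trans (leq_addl _ _).
  by apply: leq_trans (hc _); apply: leq_addr.
have hhigh := hD (tau - j.+1) (leq_ltn_trans (leq_subr _ _) (ltnSn _)) mu ms mu' hrun hr.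
rewrite subKn // in hhigh.
apply: leq_trans (List.Forall_inv (loop_run_level_growth hrun hr (List.Forall_inv_tail hhigh))) _.
rewrite leq_add2l; apply: leq_trans (hc _); apply: leq_trans (leq_addl 1 _).
rewrite leq_mul2r; apply/orP; right.
by apply: leq_trans (hcQ _ _ _ hr hrun) _; apply: leq_poly_boundr; apply: leq_max_size_level.
Qed.

End LoopBound.
End Loop.

Lemma styp_terminates top s ti tout t : aperiodic top -> styp ti tout s t ->
  all (mem V) (varsS s) -> forall mu, in_tree top (mu, s) -> exists b mu', exec mu s b mu'.
Proof.
move=> hAP; elim: s ti tout t => [|x e|s1 IH1 s2 IH2|e s1 IH1 s2 IH2|e s IH|e]
  ti tout t Hty hV mu hr.
- by exists true, mu; constructor.
- by exists true, (upd mu x (eval mu e)); constructor.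
- case/styp_Seq_inv: Hty => t0 _ [h1 h2]; move: hV; rewrite /= all_cat => /andP[hV1 hV2].
  have [[] [mu1 hx1]] := IH1 _ _ _ h1 hV1 mu (in_tree_step hr (C_seq1 _ _ _ _ _)); last first.
    by exists false, mu1; apply: E_seq_bot.
  have [b [mu2 hx2]] := IH2 _ _ _ h2 hV2 mu1 (in_tree_step hr (C_seq2 _ hx1)).
  by exists b, mu2; apply: E_seq_top hx1 hx2.
- case/styp_If_inv: Hty => t0 _ [_ h1 h2]; move: hV; rewrite /= !all_cat => /and3P[_ hV1 hV2].
  case: (eval mu e =P w1) => hg.
  + have [b [mu1 hx]] := IH1 _ _ _ h1 hV1 mu (in_tree_step hr (C_if_t _ _ hg)).
    by exists b, mu1; apply: E_if_t.
  + have [b [mu1 hx]] := IH2 _ _ _ h2 hV2 mu (in_tree_step hr (C_if_f _ _ hg)).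
    by exists b, mu1; apply: E_if_f.
- case/styp_While_inv: Hty => tau [tout' [he hs htau _ _]].
  have hVs : all (mem V) (varsS s) by move: (hV); rewrite /= all_cat => /andP[].
  have [mu' hx] := loop_terminates hAP he hs htau hV (fun m => IH _ _ _ hs hVs m) hr.
  by exists true, mu'.
- by exists (eval mu e != w1), mu; constructor.
Qed.

(** * Size bounds *)

Lemma maxlen_leq (ws : seq word) m :
  (forall i, i < size ws -> size (nth [::] ws i) <= m) -> maxlen ws <= m.
Proof.
elim: ws => [|w ws IH] h //=; rewrite geq_max (h 0) //=.
by apply: IH => i hi; apply: (h i.+1).
Qed.

Lemma size_nth_maxlen (ws : seq word) i : size (nth [::] ws i) <= maxlen ws.
Proof.
elim: ws i => [|w ws IH] [|i] //=; first by rewrite leq_maxl.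
by apply: leq_trans (IH i) _; rewrite leq_maxr.
Qed.

Lemma safe_op_size o D : Delta o = Some D -> exists c, forall ws : seq word,
  size ws = ar o -> size (sem o ws) <= poly_bound c (maxlen ws).
Proof.
move=> hD; have [[[hb|[i [hi hinf]]]|[[c hc]|[cs hcs]]] _] := safeD hD.
- by exists 1 => ws hws; rewrite poly_bound1; case: (hb ws hws) => ->.
- exists 1 => ws hws; apply: leq_trans (size_infix (hinf ws hws)) _.
  by rewrite poly_bound1; apply: leq_trans (size_nth_maxlen _ _) (leqnSn _).
- have [c' hc'] := poly_boundedD poly_bounded_id (poly_bounded_const c).
  by exists c' => ws hws; apply: leq_trans (hc ws hws) (hc' _).
- have [c' hc'] := poly_bounded_peval cs.
  by exists c' => ws hws; apply: leq_trans (hcs ws hws) (hc' _).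
Qed.

(* Inside a loop ([tout > 0]) polynomial operators are forbidden and positive ones
   produce lower levels, so a level-[t] value exceeds the levels [>= t] additively. *)
Lemma eval_size_high ti tout e t : etyp ti tout e t -> 0 < tout ->
  all (mem V) (varsE e) -> exists c, forall mu j, j <= t -> size (eval mu e) <= max_size j mu + c.
Proof.
elim=> [x|o es ts t0 D hD hts hes hsz _ IH|e1 e2 t1 t0 _ _ _ IH2 /andP[_ ht0]] hto hV.
- exists 0 => mu j hj; rewrite addn0; apply: above_max_size hj.
  by move: hV; rewrite /= andbT.
- have [cs hcs] : exists cs, forall i, i < size es -> forall mu j, j <= nth 0 ts i ->
      size (eval mu (nth (Var O 0) es i)) <= max_size j mu + cs.
    apply: common_bound => [i c c' hc h mu j hj|i hi].
      by apply: leq_trans (h mu j hj) _; rewrite leq_add2l.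
    exact: IH hi hto (all_flatten_map_nth _ hi hV).
  have hargs mu j : all (leq t0) ts -> j <= t0 -> forall i, i < size es ->
      size (nth [::] (map (eval mu) es) i) <= max_size j mu + cs.
    move=> hall hj i hi; rewrite (nth_map (Var O 0)) //; apply: hcs => //.
    by apply: leq_trans hj _; apply: (all_nthP 0 hall); rewrite hsz.
  case: (safe_op_cases hD hts) => [[hn hall]|[[c hc] hall _]|[_ h0]].
  + exists (cs + 1) => mu j hj /=; case: hn => [hb|[i [hi hinf]]].
      by case: (hb (map (eval mu) es)) => [|->|->]; rewrite ?size_map //= addnA leq_addl.
    have := hinf (map (eval mu) es); rewrite size_map => /(_ hes) /size_infix hi'.
    apply: leq_trans hi' _; rewrite addnA; apply: leq_trans (leq_addr 1 _).
    by apply: hargs => //; rewrite hes.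
  + exists (cs + c) => mu j hj /=; apply: leq_trans (hc _ _) _; first by rewrite size_map.
    rewrite addnA leq_add2r; apply: maxlen_leq => i; rewrite size_map; exact: hargs.
  + by move: hto; rewrite h0.
- move: hV; rewrite /= all_cat => /andP[_ hV2]; have [c2 hc2] := IH2 hto hV2.
  exists c2 => mu j hj /=; rewrite size_nseq; apply: leq_trans (geq_minr _ _) _.
  by apply: hc2; apply: leq_trans ht0.
Qed.

Lemma eval_size_poly e t : etyp 0 0 e t -> all (mem V) (varsE e) ->
  exists c, forall mu, size (eval mu e) <= poly_bound c (max_size 0 mu).
Proof.
elim=> [x|o es ts t0 D hD hts hes hsz _ IH|e1 e2 t1 t0 _ _ _ IH2 _] hV.
- exists 1 => mu; rewrite poly_bound1; apply: leq_trans (leqnSn _); apply: above_max_size => //.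
  by move: hV; rewrite /= andbT.
- have [cs hcs] : exists cs, forall i, i < size es -> forall mu,
      size (eval mu (nth (Var O 0) es i)) <= poly_bound cs (max_size 0 mu).
    apply: common_bound => [i c c' hc h mu|i hi].
      exact: leq_trans (h mu) (leq_poly_boundl _ hc).
    exact: IH hi (all_flatten_map_nth _ hi hV).
  have [co hco] := safe_op_size hD.
  have [c hc] := poly_bounded_comp (poly_bounded_poly_bound co) (poly_bounded_poly_bound cs).
  exists c => mu /=; apply: leq_trans (hco _ _) _; first by rewrite size_map.
  apply: leq_trans (hc (max_size 0 mu)); apply: leq_poly_boundr; apply: maxlen_leq => i.
  by rewrite size_map => hi; rewrite (nth_map (Var O 0)) //; apply: hcs.
- move: hV; rewrite /= all_cat => /andP[_ hV2]; have [c2 hc2] := IH2 hV2.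
  exists c2 => mu /=; rewrite size_nseq; apply: leq_trans (geq_minr _ _) _; exact: hc2.
Qed.

Section Combinators.
Variable top : stmt.

Lemma step_bounded_Skip : step_bounded top (Skip O) 0.
Proof. by move=> mu b mu' _ /exec_Skip_inv -> j; rewrite leq_addr. Qed.

Lemma step_bounded_Break e : step_bounded top (Break e) 0.
Proof. by move=> mu b mu' _ /exec_Break_inv -> j; rewrite leq_addr. Qed.

Lemma step_bounded_Asg ti tout x e t : styp ti tout (Asg x e) t -> 0 < tout ->
  all (mem V) (varsS (Asg x e)) -> exists c, step_bounded top (Asg x e) c.
Proof.
case/styp_Asg_inv => t2 [he [h0|hxt2] _] hto /andP[_ hVe]; first by move: hto; rewrite h0.
have [c hc] := eval_size_high he hto hVe.
exists c => mu b mu' _ /exec_Asg_inv -> j; apply: max_size_upd; last exact: leq_addr.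
move=> hj; apply: leq_trans (hc mu j (leq_trans hj hxt2)) _.
by rewrite leq_add2l leq_const_poly_bound.
Qed.

Lemma step_bounded_Seq s1 s2 c1 c2 : step_bounded top s1 c1 -> step_bounded top s2 c2 ->
  exists c, step_bounded top (Seq s1 s2) c.
Proof.
move=> hc1 hc2.
have [c hc] : poly_bounded (fun n => poly_bound c1 n + poly_bound c2 (n + poly_bound c1 n)).
  apply: (poly_boundedD (poly_bounded_poly_bound c1)).
  apply: (poly_bounded_comp (poly_bounded_poly_bound c2)).
  exact: poly_boundedD poly_bounded_id (poly_bounded_poly_bound c1).
exists c => mu b mu' hr /exec_Seq_inv [hx|[mu1 hx1 hx2]] j;
  have hr1 := in_tree_step hr (C_seq1 _ _ _ _ _).
- apply: leq_trans (hc1 _ _ _ hr1 hx j) _.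
  by rewrite leq_add2l; apply: leq_trans (hc _); apply: leq_addr.
- have hr2 := in_tree_step hr (C_seq2 _ hx1).
  have hj1 : max_size j.+1 mu1 <= max_size j.+1 mu + poly_bound c1 (max_size j.+1 mu).
    apply: leq_trans (hc1 _ _ _ hr1 hx1 j.+1) _; rewrite leq_add2l.
    by apply: leq_poly_boundr; apply: leq_max_size_level.
  apply: leq_trans (hc2 _ _ _ hr2 hx2 j) _.
  apply: leq_trans (leq_add (hc1 _ _ _ hr1 hx1 j) (leq_poly_boundr _ hj1)) _.
  by rewrite -addnA leq_add2l; apply: hc.
Qed.

Lemma step_bounded_If e s1 s2 c1 c2 : step_bounded top s1 c1 -> step_bounded top s2 c2 ->
  step_bounded top (If e s1 s2) (c1 + c2).
Proof.
move=> hc1 hc2 mu b mu' hr /exec_If_inv [[hg hx]|[hg hx]] j.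
- apply: leq_trans (hc1 _ _ _ (in_tree_step hr (C_if_t _ _ hg)) hx j) _.
  by rewrite leq_add2l leq_poly_boundl // leq_addr.
- apply: leq_trans (hc2 _ _ _ (in_tree_step hr (C_if_f _ _ hg)) hx j) _.
  by rewrite leq_add2l leq_poly_boundl // leq_addl.
Qed.

Definition size_bounded (s : stmt) (c : nat) := forall mu b mu', in_tree top (mu, s) ->
  exec mu s b mu' -> max_size 0 mu' <= poly_bound c (max_size 0 mu).

Lemma step_bounded_size_bounded s c : step_bounded top s c -> exists c', size_bounded s c'.
Proof.
move=> hc; have [c' hc'] := poly_boundedD poly_bounded_id (poly_bounded_poly_bound c).
exists c' => mu b mu' hr hx; apply: leq_trans (hc _ _ _ hr hx 0) _.
by apply: leq_trans (hc' _); rewrite leq_add2l leq_poly_boundr // leq_max_size_level.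
Qed.

Lemma size_bounded_Asg x e t : styp 0 0 (Asg x e) t -> all (mem V) (varsS (Asg x e)) ->
  exists c, size_bounded (Asg x e) c.
Proof.
case/styp_Asg_inv => t2 [he _ _] /andP[_ hVe]; have [ce hce] := eval_size_poly he hVe.
have [c hc] := poly_boundedD poly_bounded_id (poly_bounded_poly_bound ce).
exists c => mu b mu' _ /exec_Asg_inv ->; apply: max_size_upd => [_|].
- by apply: leq_trans (hce mu) _; apply: leq_trans (hc _); apply: leq_addl.
- by apply: leq_trans (hc _); apply: leq_addr.
Qed.

Lemma size_bounded_Seq s1 s2 c1 c2 : size_bounded s1 c1 -> size_bounded s2 c2 ->
  exists c, size_bounded (Seq s1 s2) c.
Proof.
move=> hc1 hc2.
have [c hc] : poly_bounded (fun n => poly_bound c1 n + poly_bound c2 (poly_bound c1 n)).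
  apply: (poly_boundedD (poly_bounded_poly_bound c1)).
  exact: poly_bounded_comp (poly_bounded_poly_bound c2) (poly_bounded_poly_bound c1).
exists c => mu b mu' hr /exec_Seq_inv [hx|[mu1 hx1 hx2]];
  have hr1 := in_tree_step hr (C_seq1 _ _ _ _ _).
- by apply: leq_trans (hc1 _ _ _ hr1 hx) _; apply: leq_trans (hc _); apply: leq_addr.
- apply: leq_trans (hc2 _ _ _ (in_tree_step hr (C_seq2 _ hx1)) hx2) _.
  apply: leq_trans (leq_poly_boundr _ (hc1 _ _ _ hr1 hx1)) _.
  by apply: leq_trans (hc _); apply: leq_addl.
Qed.

Lemma size_bounded_If e s1 s2 c1 c2 : size_bounded s1 c1 -> size_bounded s2 c2 ->
  size_bounded (If e s1 s2) (c1 + c2).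
Proof.
move=> hc1 hc2 mu b mu' hr /exec_If_inv [[hg hx]|[hg hx]].
- apply: leq_trans (hc1 _ _ _ (in_tree_step hr (C_if_t _ _ hg)) hx) _.
  by rewrite leq_poly_boundl // leq_addr.
- apply: leq_trans (hc2 _ _ _ (in_tree_step hr (C_if_f _ _ hg)) hx) _.
  by rewrite leq_poly_boundl // leq_addl.
Qed.

End Combinators.

(* A loop is typed with an inner context [tout' > 0] whatever its outer context. *)
Lemma styp_While_step_bounded top e s ti tout t : aperiodic top ->
  styp ti tout (While e s) t -> all (mem V) (varsS (While e s)) ->
  (forall ti' tout' t', styp ti' tout' s t' -> 0 < tout' -> all (mem V) (varsS s) ->
     exists c, step_bounded top s c) ->
  exists c, step_bounded top (While e s) c.
Proof.
move=> hAP /styp_While_inv [tau [tout' [he hs htau _ _]]] hV hbody.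
have hto' : 0 < tout' by case/andP: htau; apply: leq_trans.
have hVs : all (mem V) (varsS s) by move: (hV); rewrite /= all_cat => /andP[].
have [cb hcb] := hbody _ _ _ hs hto' hVs.
exact: (loop_step_bounded hAP he hs htau hV hcb).
Qed.

Lemma styp_step_bounded top s ti tout t : aperiodic top -> styp ti tout s t -> 0 < tout ->
  all (mem V) (varsS s) -> exists c, step_bounded top s c.
Proof.
move=> hAP; elim: s ti tout t => [|x e|s1 IH1 s2 IH2|e s1 IH1 s2 IH2|e s IH|e]
  ti tout t Hty hto hV.
- by exists 0; apply: step_bounded_Skip.
- exact: step_bounded_Asg Hty hto hV.
- case/styp_Seq_inv: Hty => t0 _ [h1 h2]; move: hV; rewrite /= all_cat => /andP[hV1 hV2].
  have [c1 hc1] := IH1 _ _ _ h1 hto hV1; have [c2 hc2] := IH2 _ _ _ h2 hto hV2.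
  exact: step_bounded_Seq hc1 hc2.
- case/styp_If_inv: Hty => t0 _ [_ h1 h2]; move: hV; rewrite /= !all_cat => /and3P[_ hV1 hV2].
  have [c1 hc1] := IH1 _ _ _ h1 hto hV1; have [c2 hc2] := IH2 _ _ _ h2 hto hV2.
  by exists (c1 + c2); apply: step_bounded_If.
- exact: styp_While_step_bounded hAP Hty hV IH.
- by exists 0; apply: step_bounded_Break.
Qed.

Lemma styp_size_bounded top s t : aperiodic top -> styp 0 0 s t ->
  all (mem V) (varsS s) -> exists c, size_bounded top s c.
Proof.
move=> hAP; elim: s t => [|x e|s1 IH1 s2 IH2|e s1 IH1 s2 IH2|e s IH|e] t Hty hV.
- by apply: step_bounded_size_bounded; apply: step_bounded_Skip.
- exact: size_bounded_Asg Hty hV.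
- case/styp_Seq_inv: Hty => t0 _ [h1 h2]; move: hV; rewrite /= all_cat => /andP[hV1 hV2].
  have [c1 hc1] := IH1 _ h1 hV1; have [c2 hc2] := IH2 _ h2 hV2.
  exact: size_bounded_Seq hc1 hc2.
- case/styp_If_inv: Hty => t0 _ [_ h1 h2]; move: hV; rewrite /= !all_cat => /and3P[_ hV1 hV2].
  have [c1 hc1] := IH1 _ h1 hV1; have [c2 hc2] := IH2 _ h2 hV2.
  by exists (c1 + c2); apply: size_bounded_If.
- have [c hc] := styp_While_step_bounded hAP Hty hV (fun _ _ _ => styp_step_bounded hAP).
  exact: step_bounded_size_bounded hc.
- by apply: step_bounded_size_bounded; apply: step_bounded_Break.
Qed.

End Typing.

Lemma SAFE_AP_TERM (Sigma : finType) (zero one : Sigma) (O : Type) (ar : O -> nat)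
  (sem : O -> seq (seq Sigma) -> seq Sigma) (P : prog O) :
  SAFE zero one ar sem P -> AP one sem P -> TERM one ar sem P.
Proof.
case=> Delta [Gamma [t [hsafe Hty]]] hAP; split; first exact: styp_wf Hty.
move=> ws _; have [b [mu' hx]] := styp_terminates hsafe (AP_aperiodic hAP) Hty (allss _)
  (in_tree_root one sem _ (init_store (store0 Sigma) (params P) ws)).
by exists (mu' (ret P)), b, mu'.
Qed.

(** * An exponential terminating program *)

Lemma size_init_store (Sigma : finType) (mu : store Sigma) xs (ws : seq (word Sigma)) m x :
  (forall y, size (mu y) <= m) -> (forall w, w \in ws -> size w <= m) ->
  size (init_store mu xs ws x) <= m.
Proof.
elim: xs ws mu => [|y xs IH] [|w ws] mu hmu hws //=.
apply: IH => [z|v hv]; last by apply: hws; rewrite inE hv orbT.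
by rewrite /upd; case: eqP => _; [apply: hws; rewrite inE eqxx | apply: hmu].
Qed.

Section Exponential.
Variables (Sigma : finType) (zero one : Sigma) (O : Type) (ar : O -> nat)
  (sem : O -> seq (seq Sigma) -> seq Sigma).
Hypothesis zero_neq_one : zero != one.
Variables (olt osc opr : O).
Hypotheses (hlt : is_lt_op zero one ar sem olt) (hsc : is_succ_op one ar sem osc)
  (hpr : is_pred_op ar sem opr).

Local Notation exec := (exec one sem).
Local Notation eval := (eval one sem).
Local Notation store := (store Sigma).

(* Variable 3 is never assigned, hence stays empty: [nonempty x] tests [x != eps]. *)
Definition nonempty (x : nat) : expr O := Op olt [:: Var O 3; Var O x].

Definition add_loop : stmt O :=
  While (nonempty 2) (Seq (Asg 1 (Op osc [:: Var O 1])) (Asg 2 (Op opr [:: Var O 2]))).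

Definition double_loop : stmt O :=
  While (nonempty 0) (Seq (Asg 2 (Var O 1)) (Seq add_loop (Asg 0 (Op opr [:: Var O 0])))).

(* prog(x0) { x1 := 1; while (x0 != eps) { x2 := x1;
     while (x2 != eps) { x1 := x1 + 1; x2 := x2 - 1 }; x0 := x0 - 1 } return x1 } *)
Definition exp_prog : prog O :=
  Prog [:: 0] (Seq (Asg 1 (Op osc [:: Var O 3])) double_loop) 1.

Lemma eval_nonempty (mu : store) x : mu 3 = [::] ->
  eval mu (nonempty x) = bool_w zero one (0 < size (mu x)).
Proof. by move=> h; rewrite /= (proj2 hlt) h. Qed.

Lemma bool_w_true b : (bool_w zero one b = w1 one) <-> b.
Proof.
case: b => //; split=> // -[] h.
by move: zero_neq_one; rewrite h eqxx.
Qed.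

Lemma exec_add_loop k (mu : store) a : mu 3 = [::] -> size (mu 2) = k -> mu 1 = nseq a one ->
  exists mu', [/\ exec mu add_loop true mu', mu' 1 = nseq (k + a) one, mu' 3 = [::]
                & mu' 0 = mu 0].
Proof.
elim: k mu a => [|k IH] mu a h3 h2 h1.
  exists mu; split=> //; apply: E_wh_f; rewrite eval_nonempty // h2.
  by move/bool_w_true.
pose mu1 := upd (upd mu 1 (one :: mu 1)) 2 (behead (mu 2)).
have hx1 : exec mu (Seq (Asg 1 (Op osc [:: Var O 1])) (Asg 2 (Op opr [:: Var O 2]))) true mu1.
  apply: E_seq_top; first exact: E_asg.
  have -> : mu1 = upd (upd mu 1 (eval mu (Op osc [:: Var O 1]))) 2
     (eval (upd mu 1 (eval mu (Op osc [:: Var O 1]))) (Op opr [:: Var O 2])).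
    by rewrite /mu1 /= (proj2 hsc) (proj2 hpr).
  exact: E_asg.
have [|||mu' [hx h1' h3' h0']] := IH mu1 a.+1; rewrite /mu1 /upd //=.
- by rewrite size_behead h2.
- by rewrite h1.
exists mu'; split=> //; last by rewrite h1' addnS.
apply: E_wh_t; first by rewrite eval_nonempty // h2; apply/bool_w_true.
exact: E_seq_top hx1 hx.
Qed.

Lemma exec_double_loop n (mu : store) a : mu 3 = [::] -> size (mu 0) = n ->
  mu 1 = nseq a one -> exists mu', exec mu double_loop true mu' /\ mu' 1 = nseq (a * 2 ^ n) one.
Proof.
elim: n mu a => [|n IH] mu a h3 h0 h1.
  exists mu; split; last by rewrite expn0 muln1.
  by apply: E_wh_f; rewrite eval_nonempty // h0 => /bool_w_true.
pose mu1 := upd mu 2 (mu 1).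
have [|||mu2 [hx2 h12 h32 h02]] := exec_add_loop (k := a) (mu := mu1) (a := a).
- by [].
- by rewrite /mu1 /upd /= h1 size_nseq.
- by rewrite /mu1 /upd /= h1.
pose mu3 := upd mu2 0 (behead (mu2 0)).
have [|||mu' [hx' h1']] := IH mu3 (a + a); rewrite /mu3 /upd //=.
  by rewrite size_behead h02 /mu1 /upd /= h0.
exists mu'; split; last by rewrite h1' expnS mulnA muln2 addnn.
apply: E_wh_t; first by rewrite eval_nonempty // h0; apply/bool_w_true.
apply: E_seq_top hx'; apply: E_seq_top; first exact: E_asg.
apply: E_seq_top hx2 _.
have -> : mu3 = upd mu2 0 (eval mu2 (Op opr [:: Var O 0])) by rewrite /mu3 /= (proj2 hpr).
exact: E_asg.
Qed.

Lemma exp_prog_sem (w : seq Sigma) : exists b mu',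
  exec (init_store (store0 Sigma) [:: 0] [:: w]) (body exp_prog) b mu' /\
  mu' 1 = nseq (2 ^ size w) one.
Proof.
set mu0 := init_store _ _ _.
pose mu1 := upd mu0 1 (eval mu0 (Op osc [:: Var O 3])).
have [|||mu' [hx h1]] := exec_double_loop (n := size w) (mu := mu1) (a := 1); rewrite /mu1 /upd //=.
  by rewrite (proj2 hsc).
exists true, mu'; split; last by rewrite h1 mul1n.
by apply: E_seq_top hx; apply: E_asg.
Qed.

Lemma exp_prog_TERM : TERM one ar sem exp_prog.
Proof.
split; first by rewrite /wf_prog /= (proj1 hlt) (proj1 hsc) (proj1 hpr).
case=> [|w [|w' ws]] // _; have [b [mu' [hx h1]]] := exp_prog_sem w.
by exists (mu' 1), b, mu'.
Qed.

Lemma exp_prog_not_SAFE_AP (Q : prog O) : SAFE zero one ar sem Q -> AP one sem Q ->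
  ~ same_fun one sem Q exp_prog.
Proof.
case=> Delta [Gamma [t [hsafe Hty]]] hAP [hsz hsame].
pose V := ret Q :: params Q ++ varsS (body Q).
have hV : all (mem V) (varsS (body Q)) by apply/allP => x hx; rewrite /V !inE mem_cat hx !orbT.
have [c hc] := styp_size_bounded hsafe (AP_aperiodic hAP) Hty hV.
have [n hn] := exp2_beats_poly_bound c.
have [b [mu' [hx h1]]] := exp_prog_sem (nseq n one).
have hsem : prog_sem one sem exp_prog [:: nseq n one] (nseq (2 ^ n) one).
  by exists b, mu'; split=> //; rewrite /= h1 size_nseq.
have [bq [muq [hxq hretq]]] := proj2 (hsame [:: nseq n one] _ (esym hsz)) hsem.
set mu0 := init_store (store0 Sigma) (params Q) [:: nseq n one] in hxq.
have h0 : max_size Gamma V 0 mu0 <= n.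
  apply/max_size_leq => x _ _; apply: size_init_store => // w.
  by rewrite inE => /eqP ->; rewrite size_nseq.
move: hn; rewrite ltnNge => /negP; apply.
rewrite -(size_nseq (2 ^ n) one) -hretq.
apply: leq_trans (leq_trans _ (hc _ _ _ (in_tree_root one sem _ mu0) hxq)) (leq_poly_boundr _ h0).
by apply: above_max_size; rewrite ?inE ?eqxx.
Qed.

End Exponential.

Unset Implicit Arguments.

Theorem mainTheorem3 (Sigma : finType) (zero one : Sigma) (O : Type)
  (ar : O -> nat) (sem : O -> seq (seq Sigma) -> seq Sigma) :
  zero != one ->
  has_basic_ops zero one ar sem ->
  (forall P : prog O, SAFE zero one ar sem P -> AP one sem P -> TERM one ar sem P) /\
  (exists P : prog O, TERM one ar sem P /\
     forall Q : prog O, SAFE zero one ar sem Q -> AP one sem Q -> ~ same_fun one sem Q P).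
Proof.
move=> hz [_ [[olt hlt] [_ [_ [[osc hsc] [[opr hpr] _]]]]]].
split; first exact: SAFE_AP_TERM.
exists (exp_prog olt osc opr); split; first exact: (exp_prog_TERM hz hlt hsc hpr).
exact: (exp_prog_not_SAFE_AP hz hlt hsc hpr).
Qed.
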